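(* For integers $k\ge 2$, $N\ge 2$, $$\det(\widetilde H)=\frac{N^{\binom{k}{2}}}{k!}\prod_{i=1}^{k-1}(iN+1).$$
   Context: $H[c,c'] = \#\{(d_1,\ldots,d_k)\in\{0,\ldots,N-1\}^k : \lfloor (d_1+\cdots+d_k+c)/N\rfloor = c'\}$ for $c,c'\in\{0,\ldots,k-1\}$; $\widetilde H$ is the leading $(k-1)\times(k-1)$ principal submatrix of $H$ (indices $0,\ldots,k-2$). *)

From mathcomp Require Import all_boot all_order all_algebra.
Set Implicit Arguments. Unset Strict Implicit. Unset Printing Implicit Defensive.
Import GRing.Theory Num.Theory.
Local Open Scope ring_scope.

Definition Hentry (k N c c' : nat) : nat :=
  #|[set d : {ffun 'I_k -> 'I_N} | ((\sum_(i < k) (d i : nat) + c) %/ N)%N == c']|.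

(* The leading (k-1)x(k-1) principal submatrix of H (indices 0..k-2), over rat. *)
Definition Htilde (k N : nat) : 'M[rat]_(k.-1) :=
  \matrix_(c < k.-1, c' < k.-1) (Hentry k N c c')%:R.

(** The partial row sums of [Htilde k N] count the [d] in [{0..N-1}^k] with
    [d_1 + ... + d_k + c < (t+1) N].  Inclusion-exclusion over the coordinates
    reaching [N] writes these counts as alternating binomial sums of the
    multiset coefficients [binom(x + k - 1, k)], so that
    [Htilde * U1 = Q * U2] with [U1], [U2] unitriangular and
    [Q i l = binom((l+1) N - i + k - 1, k)].  As a polynomial in [x = (l+1) N],
    [Q i l] is [x (x + 1) / k!] times a polynomial [R_i] of degree [k - 2].
    Scaling the evaluation points [1, ..., k-1] by [N] multiplies the
    determinant of [(R_i(x_l))] by [N^binom(k-1, 2)] (factor through a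
    Vandermonde matrix), and at the points [1, ..., k-1] this matrix is
    triangular, since [R_i] vanishes at [1, ..., i]; its diagonal is read off
    from [binom(k, k) = 1]. *)

From mathcomp Require Import all_boot all_order all_algebra ring lra zify.
Import GRing.Theory Num.Theory.
Set Implicit Arguments.
Unset Strict Implicit.
Unset Printing Implicit Defensive.
Local Open Scope ring_scope.

Lemma fact_neq0 (R : numDomainType) (n : nat) : n`!%:R != 0 :> R.
Proof. by rewrite pnatr_eq0 -lt0n fact_gt0. Qed.

Lemma card_set_sum (T : finType) (P : pred T) : #|[set d | P d]| = (\sum_d P d)%N.
Proof. by rewrite -sum1_card big_mkcond; apply: eq_bigr => d _; rewrite inE. Qed.

Definition fcons (T : finType) (k : nat) (e : T) (d : {ffun 'I_k -> T}) :
    {ffun 'I_k.+1 -> T} :=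
  [ffun i => if unlift ord0 i is Some j then d j else e].

Lemma big_ffun_recl (R : Type) (idx : R) (op : Monoid.com_law idx)
    (T : finType) (k : nat) (F : {ffun 'I_k.+1 -> T} -> R) :
  \big[op/idx]_d F d =
  \big[op/idx]_(e : T) \big[op/idx]_(d : {ffun 'I_k -> T}) F (fcons e d).
Proof.
rewrite pair_big /= (reindex (fun p : T * {ffun 'I_k -> T} => fcons p.1 p.2)) //=.
exists (fun d : {ffun 'I_k.+1 -> T} => (d ord0, [ffun j => d (lift ord0 j)])).
  move=> [e d] _; congr (_, _); first by rewrite ffunE unlift_none.
  by apply/ffunP => j; rewrite !ffunE liftK.
move=> d _; apply/ffunP => i; rewrite ffunE.
by case: unliftP => [j ->|->]; rewrite ?ffunE.
Qed.

Lemma alternating_binom_diff (R : comRingType) (F : nat -> R) (k : nat) :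
  \sum_(0 <= j < k.+1) (-1) ^+ j * 'C(k, j)%:R * (F j - F j.+1) =
  \sum_(0 <= j < k.+2) (-1) ^+ j * 'C(k.+1, j)%:R * F j.
Proof.
under eq_bigr => j _ do rewrite mulrBr.
rewrite sumrB big_nat_recl // [RHS]big_nat_recl //.
under [in RHS]eq_bigr => j _ do rewrite binS natrD mulrDr mulrDl.
rewrite big_split /= !bin0 !expr0 !mul1r.
rewrite [X in _ = _ + (X + _)]big_nat_recr //= bin_small // mulr0 mul0r addr0.
have -> : \sum_(0 <= i < k.+1) (-1) ^+ i.+1 * 'C(k, i)%:R * F i.+1 =
          - \sum_(0 <= i < k.+1) (-1) ^+ i * 'C(k, i)%:R * F i.+1.
  by rewrite -sumrN; apply: eq_bigr => i _; rewrite exprS; ring.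
ring.
Qed.

Lemma sum_mul_indicator_leq (R : pzSemiRingType) (n t : nat) (F : nat -> R) :
  (t < n)%N ->
  \sum_(j < n) F j * (j <= t)%N%:R = \sum_(j < t.+1) F j.
Proof.
move=> ht; rewrite [RHS](big_ord_widen n F ht) [RHS]big_mkcond /=.
by apply: eq_bigr => j _; rewrite ltnS; case: leqP; rewrite ?mulr1 ?mulr0.
Qed.

Lemma det_upper_unitrig (R : comRingType) (n : nat) (A : 'M[R]_n) :
  (forall i j : 'I_n, (j < i)%N -> A i j = 0) -> (forall i, A i i = 1) -> \det A = 1.
Proof.
move=> A_upper A_diag; rewrite -det_tr det_trig; last first.
  by apply/is_trig_mxP => i j hij; rewrite mxE A_upper.
by rewrite big1 // => i _; rewrite mxE A_diag.
Qed.

Section HornerMatrix.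
Variables (R : comRingType) (n : nat) (p : 'I_n -> {poly R}).
Hypothesis size_p : forall i, (size (p i) <= n)%N.

Lemma horner_mx_Vandermonde (a : 'rV[R]_n) :
  \matrix_(i, t) (p i).[a 0 t] = \matrix_(i, j) (p i)`_j *m Vandermonde n a.
Proof.
apply/matrixP => i t; rewrite !mxE (horner_coef_wide _ (size_p i)).
by apply: eq_bigr => j _; rewrite !mxE.
Qed.

Lemma det_horner_mx_scale (c : R) (a : 'rV[R]_n) :
  \det (\matrix_(i, t) (p i).[c * a 0 t]) =
  c ^+ 'C(n, 2) * \det (\matrix_(i, t) (p i).[a 0 t]).
Proof.
have -> : \matrix_(i, t) (p i).[c * a 0 t] = \matrix_(i, t) (p i).[(c *: a) 0 t].
  by apply/matrixP => i t; rewrite !mxE.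
have scaleV : Vandermonde n (c *: a) = diag_mx (\row_j c ^+ j) *m Vandermonde n a.
  by apply/matrixP => j t; rewrite mul_diag_mx !mxE exprMn.
rewrite !horner_mx_Vandermonde scaleV !det_mulmx det_diag mulrCA; congr (_ * _).
under eq_bigr => j _ do rewrite mxE.
by rewrite prodrXr -bin2_sum big_mkord.
Qed.

End HornerMatrix.

Definition mchoose (k : nat) (x : int) : rat :=
  (\prod_(r < k) (x%:~R + r%:R)) / k`!%:R.

Lemma mchoose0 (x : int) : mchoose 0 x = 1.
Proof. by rewrite /mchoose big_ord0 fact0 divr1. Qed.

Lemma mchoose1 (k : nat) : mchoose k 1 = 1.
Proof.
rewrite /mchoose fact_prod big_add1 big_mkord natr_prod.
have -> : \prod_(r < k) (1%:~R + r%:R) = \prod_(r < k) r.+1%:R :> rat.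
  by apply: eq_bigr => r _; rewrite -natr1 addrC.
by rewrite divff //; apply/prodf_neq0 => r _; rewrite pnatr_eq0.
Qed.

Lemma mchoose_diff (k : nat) (x : int) :
  mchoose k.+1 x - mchoose k.+1 (x - 1) = mchoose k x.
Proof.
rewrite /mchoose big_ord_recr big_ord_recl /= rmorphB /= factS natrM.
have -> : \prod_(i < k) ((x%:~R - 1) + (bump 0 i)%:R) =
          \prod_(i < k) (x%:~R + i%:R) :> rat.
  by apply: eq_bigr => i _; rewrite /bump add1n -natr1; ring.
rewrite addr0 -natr1; field.
by rewrite fact_neq0 natr1 pnatr_eq0.
Qed.

Lemma mchoose_eq0 (k : nat) (x : int) :
  0 < x + k%:Z -> x <= 0 -> mchoose k x = 0.
Proof.
move=> hxk hx0; have hk : (`|x| < k)%N by lia.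
rewrite /mchoose (bigD1 (Ordinal hk)) //=.
have -> : (`|x|%N)%:R = (- x)%:~R :> rat by have -> : - x = `|x|%N by lia.
by rewrite rmorphN subrr !mul0r.
Qed.

(* For [0 < x] this counts the [d] in [nat^k] with [d_1 + ... + d_k < x]. *)
Definition mchoose_pos (k : nat) (x : int) : rat :=
  if 0 < x then mchoose k x else 0.

Lemma mchoose_posE (k : nat) (x : int) :
  0 < x + k%:Z -> mchoose_pos k x = mchoose k x.
Proof.
by rewrite /mchoose_pos => hxk; case: ltrP => // hx; rewrite mchoose_eq0.
Qed.

Lemma mchoose_pos_diff (k : nat) (x : int) :
  mchoose_pos k.+1 x - mchoose_pos k.+1 (x - 1) = mchoose_pos k x.
Proof.
rewrite /mchoose_pos; case: (ltrP 0 x) => hx; last first.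
  by rewrite ifF ?subr0 //; apply/negbTE; lia.
case: (ltrP 0 (x - 1)) => hx1; first exact: mchoose_diff.
have -> : x = 1 by lia.
by rewrite subr0 -(mchoose_diff k 1) (@mchoose_eq0 _ (1 - 1)) ?subr0.
Qed.

Lemma mchoose_pos_telescope (k M : nat) (x : int) :
  \sum_(e < M) mchoose_pos k (x - e%:Z) =
  mchoose_pos k.+1 x - mchoose_pos k.+1 (x - M%:Z).
Proof.
elim: M => [|M IH]; first by rewrite big_ord0 subr0 subrr.
rewrite big_ord_recr /= IH -(mchoose_pos_diff k (x - M%:Z)).
have -> : x - M%:Z - 1 = x - M.+1%:Z by lia.
ring.
Qed.

Definition sum_lt_count (k N a b : nat) : nat :=
  #|[set d : {ffun 'I_k -> 'I_N} | (\sum_(i < k) (d i : nat) + a < b)%N]|.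

Lemma sum_lt_count0 (N a b : nat) : sum_lt_count 0 N a b = (a < b)%N.
Proof.
rewrite /sum_lt_count card_set_sum.
under eq_bigr => d _ do rewrite big_ord0 add0n.
by rewrite sum_nat_const card_ffun !card_ord expn0 mul1n.
Qed.

Lemma sum_lt_countS (k N a b : nat) :
  sum_lt_count k.+1 N a b = (\sum_(e < N) sum_lt_count k N (a + e) b)%N.
Proof.
rewrite /sum_lt_count card_set_sum big_ffun_recl; apply: eq_bigr => e _.
rewrite card_set_sum; apply: eq_bigr => d _; rewrite big_ord_recl ffunE unlift_none.
under eq_bigr => i _ do rewrite ffunE liftK.
by rewrite [(e + _)%N]addnC -addnA [(e + a)%N]addnC.
Qed.

Lemma sum_lt_count_incl_excl (k N a b : nat) :
  (sum_lt_count k N a b)%:R =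
  \sum_(0 <= j < k.+1)
    (-1) ^+ j * 'C(k, j)%:R * mchoose_pos k (b%:Z - a%:Z - (j * N)%:Z).
Proof.
elim: k a => [|k IH] a.
  rewrite sum_lt_count0 big_nat1 /mchoose_pos expr0 bin0 !mul1r mul0n subr0 mchoose0.
  by case: ltnP => h; [rewrite ifT | rewrite ifF] => //; lia.
rewrite sum_lt_countS natr_sum.
under eq_bigr => e _ do rewrite IH.
rewrite exchange_big /= -alternating_binom_diff; apply: eq_bigr => j _.
rewrite -mulr_sumr; congr (_ * _).
have -> : b%:Z - a%:Z - (j.+1 * N)%:Z = b%:Z - a%:Z - (j * N)%:Z - N%:Z by lia.
rewrite -mchoose_pos_telescope; apply: eq_bigr => e _; congr (mchoose_pos _ _); lia.
Qed.

Lemma sum_lt_count_Hentry (k N c j : nat) : (0 < N)%N ->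
  (sum_lt_count k N c (j * N) + Hentry k N c j)%N = sum_lt_count k N c (j.+1 * N).
Proof.
move=> hN; rewrite /sum_lt_count /Hentry !card_set_sum -big_split.
apply: eq_bigr => d _ /=; set x := (\sum_(i < k) _ + c)%N.
have -> : (x %/ N == j)%N = (j <= x %/ N < j.+1)%N by rewrite ltnS andbC eqn_leq.
rewrite ltn_divLR // leq_divRL //.
by case: (ltnP x (j.+1 * N)); case: (ltnP x (j * N)) => /=; lia.
Qed.

Lemma sum_Hentry (k N c t : nat) : (0 < N)%N ->
  (\sum_(j < t) Hentry k N c j)%N = sum_lt_count k N c (t * N).
Proof.
move=> hN; elim: t => [|t IH].
  by rewrite big_ord0 /sum_lt_count card_set_sum big1.
by rewrite big_ord_recr /= IH sum_lt_count_Hentry.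
Qed.

Lemma sum_lt_count_mulNE (n N i t : nat) : (i < n)%N -> (t < n)%N ->
  (sum_lt_count n.+1 N i (t.+1 * N))%:R =
  \sum_(l < t.+1)
    mchoose n.+1 ((l.+1 * N)%:Z - i%:Z) * ((-1) ^+ (t - l) * 'C(n.+1, t - l)%:R).
Proof.
move=> hi ht; rewrite sum_lt_count_incl_excl.
rewrite (big_cat_nat _ (n := t.+1)) //=; last by lia.
rewrite [X in _ + X]big_nat_cond [X in _ + X]big1 ?addr0; last first.
  move=> j /andP[/andP[hj _] _].
  have hjN : (t.+1 * N <= j * N)%N by rewrite leq_mul2r hj orbT.
  by rewrite /mchoose_pos ifF ?mulr0 //; lia.
rewrite big_mkord (reindex_inj rev_ord_inj) /=; apply: eq_bigr => l _.
have hl := ltn_ord l.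
rewrite subSS mchoose_posE; last by lia.
have -> : (t.+1 * N)%:Z - i%:Z - ((t - l) * N)%:Z = (l.+1 * N)%:Z - i%:Z.
  have : ((t - l) * N + l.+1 * N = t.+1 * N)%N by rewrite -mulnDl; congr (_ * _)%N; lia.
  lia.
ring.
Qed.

Definition upper_ones (n : nat) : 'M[rat]_n := \matrix_(j, t) (j <= t)%N%:R.

Definition alt_binom_mx (n : nat) : 'M[rat]_n :=
  \matrix_(l, t) ((-1) ^+ (t - l) * 'C(n.+1, t - l)%:R * (l <= t)%N%:R).

Definition mchoose_mx (n N : nat) : 'M[rat]_n :=
  \matrix_(i, l) mchoose n.+1 ((l.+1 * N)%:Z - i%:Z).

Lemma det_upper_ones (n : nat) : \det (upper_ones n) = 1.
Proof. by apply: det_upper_unitrig => [i j ji|i]; rewrite mxE ?leqnn // leqNgt ji. Qed.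

Lemma det_alt_binom_mx (n : nat) : \det (alt_binom_mx n) = 1.
Proof.
apply: det_upper_unitrig => [i j ji|i]; rewrite mxE; last by rewrite leqnn subnn mulr1.
by rewrite leqNgt ji mulr0.
Qed.

Lemma Htilde_mul_upper_ones (n N : nat) : (0 < N)%N ->
  Htilde n.+1 N *m upper_ones n = mchoose_mx n N *m alt_binom_mx n.
Proof.
move=> hN; apply/matrixP => i t; rewrite !mxE.
under eq_bigr => j _ do rewrite !mxE.
rewrite (sum_mul_indicator_leq (fun j => (Hentry n.+1 N i j)%:R) (ltn_ord t)).
rewrite -natr_sum sum_Hentry //.
pose F l :=
  mchoose n.+1 ((l.+1 * N)%:Z - i%:Z) * ((-1) ^+ (t - l) * 'C(n.+1, t - l)%:R).
rewrite sum_lt_count_mulNE // -(sum_mul_indicator_leq F (ltn_ord t)).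
by apply: eq_bigr => l _; rewrite /F !mxE !mulrA.
Qed.

Lemma det_Htilde_mchoose_mx (n N : nat) : (0 < N)%N ->
  \det (Htilde n.+1 N) = \det (mchoose_mx n N).
Proof.
move=> hN; have := congr1 determinant (@Htilde_mul_upper_ones n N hN).
by rewrite !det_mulmx det_upper_ones det_alt_binom_mx !mulr1.
Qed.

(* [lift ord_max i] and [lift ord0 i] are [i] and [i + 1]: the factors [x] and
   [x + 1] of [mchoose n.+1 (x - i)] are left out. *)
Definition mchoose_cofactor (n : nat) (i : 'I_n) : {poly rat} :=
  \prod_(r | r \notin [:: lift ord_max i; lift ord0 i]) ('X - (i%:R - r%:R)%:P).

Lemma horner_mchoose_cofactor (n : nat) (i : 'I_n) (x : rat) :
  (mchoose_cofactor i).[x] =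
  \prod_(r | r \notin [:: lift ord_max i; lift ord0 i]) (x - i%:R + (r : nat)%:R).
Proof.
rewrite horner_prod; apply: eq_bigr => r _; rewrite hornerXsubC; ring.
Qed.

Lemma size_mchoose_cofactor (n : nat) (i : 'I_n) : size (mchoose_cofactor i) = n.
Proof.
rewrite size_prod => [|r _]; last by rewrite polyXsubC_eq0.
under eq_bigr => r _ do rewrite size_XsubC.
rewrite sum_nat_const; set c := #|_|.
have := cardC (mem [:: lift ord_max i; lift ord0 i]).
rewrite card_ord (card_uniqP _) /=; last first.
  by rewrite inE andbT -(inj_eq val_inj) /= /bump; have := ltn_ord i; lia.
have -> : #|[predC [:: lift ord_max i; lift ord0 i]]| = c.
  by apply: eq_card => r; rewrite !inE.
rewrite -[2%R]/2%N; lia.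
Qed.

Lemma mchoose_factor (n : nat) (i : 'I_n) (x : int) :
  mchoose n.+1 (x - i%:Z) =
  x%:~R * (x%:~R + 1) / n.+1`!%:R * (mchoose_cofactor i).[x%:~R].
Proof.
have hi := ltn_ord i.
have hi01 : lift ord0 i != lift ord_max i by rewrite -(inj_eq val_inj) /= /bump; lia.
rewrite /mchoose (bigD1 (lift ord_max i)) // (bigD1 (lift ord0 i)) //=.
rewrite horner_mchoose_cofactor rmorphB /= /bump leqNgt hi add0n add1n.
rewrite (eq_bigl (fun r => r \notin [:: lift ord_max i; lift ord0 i])); last first.
  by move=> r; rewrite !inE negb_or.
rewrite -[(i%:Z)%:~R]/(i%:R : rat) -natr1; field; exact: fact_neq0.
Qed.

Lemma mchoose_cofactor_root (n : nat) (i t : 'I_n) :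
  (t < i)%N -> (mchoose_cofactor i).[t.+1%:R] = 0.
Proof.
move=> ti; have hi := ltn_ord i; have hr : (i - t.+1 < n.+1)%N by lia.
rewrite horner_mchoose_cofactor (bigD1 (Ordinal hr)) /=; last first.
  by rewrite !inE -!(inj_eq val_inj) /= /bump; lia.
by rewrite natrB // addrA subrK subrr mul0r.
Qed.

Lemma mchoose_cofactor_diag (n : nat) (i : 'I_n) :
  i.+1%:R * i.+2%:R * (mchoose_cofactor i).[i.+1%:R] = n.+1`!%:R.
Proof.
have := mchoose_factor i i.+1.
rewrite (_ : i.+1%:Z - i%:Z = 1) ?mchoose1; last by lia.
rewrite -[(i.+1%:Z)%:~R]/(i.+1%:R : rat) -[i.+2%:R]natr1 => h.
have := congr1 (fun y => n.+1`!%:R * y) h; rewrite mulr1 => ->.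
field; exact: fact_neq0.
Qed.

Lemma det_mchoose_cofactor_mx (n : nat) :
  \det (\matrix_(i < n, t < n) (mchoose_cofactor i).[t.+1%:R]) =
  \prod_(i < n) (mchoose_cofactor i).[i.+1%:R].
Proof.
rewrite -det_tr det_trig; first by apply: eq_bigr => i _; rewrite !mxE.
by apply/is_trig_mxP => i t ti; rewrite !mxE mchoose_cofactor_root.
Qed.

Lemma det_mchoose_mx (n N : nat) :
  \det (mchoose_mx n N) =
  N%:R ^+ 'C(n.+1, 2) / n.+1`!%:R * \prod_(i < n) (i.+1 * N + 1)%:R.
Proof.
pose a : 'rV[rat]_n := \row_t t.+1%:R.
pose x (t : nat) : rat := (t.+1 * N)%:R.
have split_mx : mchoose_mx n N =
    \matrix_(i, t) (mchoose_cofactor i).[N%:R * a 0 t] *m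
    diag_mx (\row_t (x t * (x t + 1) / n.+1`!%:R)).
  apply/matrixP => i t; rewrite mul_mx_diag !mxE mchoose_factor.
  by rewrite -[((t.+1 * N)%:Z)%:~R]/(x t) /x natrM mulrC [N%:R * _]mulrC.
rewrite split_mx det_mulmx det_horner_mx_scale => [|i]; last first.
  by rewrite size_mchoose_cofactor.
have -> : \matrix_(i, t) (mchoose_cofactor i).[a 0 t] =
          \matrix_(i < n, t < n) (mchoose_cofactor i).[t.+1%:R].
  by apply/matrixP => i t; rewrite !mxE.
have diag_weight (i : 'I_n) :
    (mchoose_cofactor i).[i.+1%:R] * (x i * (x i + 1) / n.+1`!%:R) =
    N%:R * (x i + 1) / i.+2%:R.
  have i_ge0 := ler0n rat i.
  have -> : (mchoose_cofactor i).[i.+1%:R] = n.+1`!%:R / (i.+1%:R * i.+2%:R).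
    by rewrite -(mchoose_cofactor_diag i); field; apply/andP; split; apply/eqP; lra.
  rewrite /x natrM; field; rewrite fact_neq0; apply/andP; split; apply/eqP; lra.
rewrite det_mchoose_cofactor_mx det_diag -[LHS]mulrA -big_split /=.
under eq_bigr => i _ do rewrite mxE diag_weight.
rewrite !big_split /= prodr_const card_ord prodfV.
have -> : \prod_(i < n) i.+2%:R = n.+1`!%:R :> rat.
  by rewrite fact_prod big_add1 big_nat_recl // mul1n big_mkord natr_prod.
under [X in _ = _ * X]eq_bigr => i _ do rewrite natrD.
rewrite binS bin1 exprD; ring.
Qed.

Theorem mainTheorem11 (k N : nat) (hk : (2 <= k)%N) (hN : (2 <= N)%N) :
  \det (Htilde k N) =
    (N ^ 'C(k, 2))%:R / (k`!)%:R * \prod_(1 <= i < k) ((i * N + 1)%N%:R : rat).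
Proof.
case: k hk => [//|n] _.
rewrite det_Htilde_mchoose_mx; last by lia.
by rewrite det_mchoose_mx natrX big_add1 big_mkord.
Qed.
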